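(* Let $\eta\colon\mathcal F\to\mathcal G$ be an exact functor between exact categories satisfying ($*'$), (i$'$) and (ii$'$). Then for any $X\in\mathcal F$ and any admissible epimorphism $T\to\eta(X)$ in $\mathcal G$ there exist an admissible epimorphism $Z\to X$ in $\mathcal F$ and an admissible epimorphism $\eta(Z)\to T$ in $\mathcal G$ such that the composition $\eta(Z)\to T\to\eta(X)$ equals $\eta(Z\to X)$. Moreover, if $\eta$ reflects admissible epimorphisms and satisfies ($*'$) and (ii$'$), then $\eta$ satisfies (i$'$).
   Context: Exact categories in Quillen's sense. Conditions for an exact functor $\eta\colon\mathcal F\to\mathcal G$: (i$'$) for any $X\in\mathcal F$ and any admissible epimorphism $T\to\eta(X)$ there exist an admissible epimorphism $Z\to X$ in $\mathcal F$ and a morphism $\eta(Z)\to T$ in $\mathcal G$ such that $\eta(Z)\to T\to\eta(X)$ equals $\eta(Z\to X)$; (ii$'$) for any $X,Y\in\mathcal F$ and any morphism $g\colon\eta(X)\to\eta(Y)$ there exist an admissible epimorphism $p\colon X'\to X$ and a morphism $h\colon X'\to Y$ in $\mathcal F$ with $g\circ\eta(p)=\eta(h)$; ($*'$) for any $T\in\mathcal G$ there exist $U\in\mathcal F$ and an admissible epimorphism $\eta(U)\to T$. *)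

From HB Require Import structures.
From mathcomp Require Import all_boot all_algebra.
Set Implicit Arguments. Unset Strict Implicit. Unset Printing Implicit Defensive.
Import GRing.Theory.
Local Open Scope ring_scope.

Record PreAdditive := {
  Obj :> Type;
  Hom : Obj -> Obj -> zmodType;
  idm : forall A : Obj, Hom A A;
  compose : forall A B C : Obj, Hom B C -> Hom A B -> Hom A C;
  comp_assoc : forall A B C D (h : Hom C D) (g : Hom B C) (f : Hom A B),
      compose h (compose g f) = compose (compose h g) f;
  comp_id_l : forall A B (f : Hom A B), compose (idm B) f = f;
  comp_id_r : forall A B (f : Hom A B), compose f (idm A) = f;
  comp_addl : forall A B C (g1 g2 : Hom B C) (f : Hom A B),
      compose (g1 + g2) f = compose g1 f + compose g2 f;
  comp_addr : forall A B C (g : Hom B C) (f1 f2 : Hom A B),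
      compose g (f1 + f2) = compose g f1 + compose g f2
}.
Arguments Hom {p}.
Arguments idm {p}.
Arguments compose {p A B C}.

Section Notions.
Variable C : PreAdditive.

Definition is_zero_object (Z : C) : Prop :=
  (forall A (f g : Hom A Z), f = g) /\ (forall A (f g : Hom Z A), f = g).

Definition is_biproduct (A B S : C) (i1 : Hom A S) (i2 : Hom B S)
  (p1 : Hom S A) (p2 : Hom S B) : Prop :=
  [/\ compose p1 i1 = idm A, compose p2 i2 = idm B, compose p1 i2 = 0, compose p2 i1 = 0
    & compose i1 p1 + compose i2 p2 = idm S].

Definition is_additive : Prop :=
  (exists Z : C, is_zero_object Z) /\
  (forall A B : C, exists (S : C) (i1 : Hom A S) (i2 : Hom B S)
     (p1 : Hom S A) (p2 : Hom S B), is_biproduct i1 i2 p1 p2).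

Definition is_kernel (A B D : C) (i : Hom A B) (p : Hom B D) : Prop :=
  compose p i = 0 /\
  forall E (f : Hom E B), compose p f = 0 ->
    exists g : Hom E A, compose i g = f /\ forall g' : Hom E A, compose i g' = f -> g' = g.

Definition is_cokernel (A B D : C) (i : Hom A B) (p : Hom B D) : Prop :=
  compose p i = 0 /\
  forall E (f : Hom B E), compose f i = 0 ->
    exists g : Hom D E, compose g p = f /\ forall g' : Hom D E, compose g' p = f -> g' = g.

Definition is_iso (A B : C) (f : Hom A B) : Prop :=
  exists g : Hom B A, compose g f = idm A /\ compose f g = idm B.

Definition is_pushout (A B A' B' : C) (i : Hom A B) (f : Hom A A')
  (f' : Hom B B') (i' : Hom A' B') : Prop :=
  compose f' i = compose i' f /\
  forall D (g : Hom B D) (h : Hom A' D), compose g i = compose h f ->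
    exists u : Hom B' D, (compose u f' = g /\ compose u i' = h) /\
      forall u' : Hom B' D, compose u' f' = g -> compose u' i' = h -> u' = u.

Definition is_pullback (B D B' D' : C) (p : Hom B D) (f : Hom D' D)
  (f' : Hom B' B) (p' : Hom B' D') : Prop :=
  compose p f' = compose f p' /\
  forall E (g : Hom E B) (h : Hom E D'), compose p g = compose f h ->
    exists u : Hom E B', (compose f' u = g /\ compose p' u = h) /\
      forall u' : Hom E B', compose f' u' = g -> compose p' u' = h -> u' = u.

End Notions.

(** An exact structure on an additive category (Quillen; axioms as in
    Keller / Buehler, "Exact categories", Def. 2.1). *)
Definition conflation_class (C : PreAdditive) :=
  forall A B D : C, Hom A B -> Hom B D -> Prop.

Section ExactAxioms.
Variables (C : PreAdditive) (E : conflation_class C).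

Definition adm_mono (A B : C) (i : Hom A B) : Prop :=
  exists (D : C) (p : Hom B D), E i p.
Definition adm_epi (B D : C) (p : Hom B D) : Prop :=
  exists (A : C) (i : Hom A B), E i p.

Definition exact_structure_axioms : Prop :=
  [/\
      (forall A B D (i : Hom A B) (p : Hom B D), E i p ->
         is_kernel i p /\ is_cokernel i p),
      (forall A B D A' B' D' (i : Hom A B) (p : Hom B D)
              (i' : Hom A' B') (p' : Hom B' D')
              (a : Hom A A') (b : Hom B B') (d : Hom D D'),
         E i p -> is_iso a -> is_iso b -> is_iso d ->
         compose b i = compose i' a -> compose d p = compose p' b -> E i' p'),
      (forall A : C, adm_mono (idm A)) /\ (forall A : C, adm_epi (idm A)),
      (forall A B D (i : Hom A B) (j : Hom B D),
         adm_mono i -> adm_mono j -> adm_mono (compose j i)) /\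
      (forall A B D (p : Hom A B) (q : Hom B D),
         adm_epi p -> adm_epi q -> adm_epi (compose q p))
    &
      (forall A B A' (i : Hom A B) (f : Hom A A'), adm_mono i ->
         exists (B' : C) (f' : Hom B B') (i' : Hom A' B'),
           is_pushout i f f' i' /\ adm_mono i') /\
      (forall B D D' (p : Hom B D) (f : Hom D' D), adm_epi p ->
         exists (B' : C) (f' : Hom B' B) (p' : Hom B' D'),
           is_pullback p f f' p' /\ adm_epi p')].

End ExactAxioms.

Record ExactCategory := {
  ecat :> PreAdditive;
  ecat_additive : is_additive ecat;
  conflation : conflation_class ecat;
  ecat_exact : exact_structure_axioms conflation
}.

Definition eadm_epi (C : ExactCategory) (B D : C) (p : Hom B D) : Prop :=
  adm_epi (@conflation C) p.

Record ExactFunctor (F G : ExactCategory) := {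
  fobj :> F -> G;
  fmap : forall A B : F, Hom A B -> Hom (fobj A) (fobj B);
  fmap_id : forall A : F, fmap (idm A) = idm (fobj A);
  fmap_comp : forall A B D (g : Hom B D) (f : Hom A B),
      fmap (compose g f) = compose (fmap g) (fmap f);
  fmap_add : forall A B (f g : Hom A B), fmap (f + g) = fmap f + fmap g;
  fmap_conflation : forall A B D (i : Hom A B) (p : Hom B D),
      @conflation F _ _ _ i p -> @conflation G _ _ _ (fmap i) (fmap p)
}.
Arguments fmap {F G} e {A B}.

Section Conditions.
Variables (F G : ExactCategory) (eta : ExactFunctor F G).

Definition cond_i : Prop :=
  forall (X : F) (T : G) (g : Hom T (eta X)), eadm_epi g ->
    exists (Z : F) (p : Hom Z X) (f : Hom (eta Z) T),
      eadm_epi p /\ compose g f = fmap eta p.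

Definition cond_ii : Prop :=
  forall (X Y : F) (g : Hom (eta X) (eta Y)),
    exists (X' : F) (p : Hom X' X) (h : Hom X' Y),
      eadm_epi p /\ compose g (fmap eta p) = fmap eta h.

Definition cond_star : Prop :=
  forall T : G, exists (U : F) (q : Hom (eta U) T), eadm_epi q.

Definition reflects_adm_epi : Prop :=
  forall (X Y : F) (p : Hom X Y), eadm_epi (fmap eta p) -> eadm_epi p.

End Conditions.

(* Given an admissible epimorphism g : T -> eta X, pick q : eta U -> T by ( *')
   and apply (ii') to g q, obtaining h : U' -> X through an admissible epi
   p' : U' -> U.  Then q (eta p') : eta U' -> T is an admissible epi lifting h,
   which proves the second claim when eta reflects admissible epis.  For the
   first claim, add the solution p0 : Z0 -> X, f0 : eta Z0 -> T of (i') as a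
   direct summand: Z := Z0 (+) U' maps to X by [p0, h] and eta Z maps to T by
   [f0, q (eta p')].  Both are admissible epis because in an exact category
   [f, e] : A (+) B -> T is an admissible epi as soon as e is: it factors as
   1 (+) e, a pullback of e, followed by [f, 1], which is the second projection
   for a sheared biproduct structure on A (+) T. *)
From mathcomp Require Import all_boot ssralg.
Set Implicit Arguments. Unset Strict Implicit. Unset Printing Implicit Defensive.
Import GRing.Theory.
Local Open Scope ring_scope.

Section PreAdditiveFacts.
Variable C : PreAdditive.
Implicit Types A B D S T : C.

Lemma comp0l A B D (f : Hom A B) : compose (0 : Hom B D) f = 0.
Proof. by apply: (@addrI _ (compose 0 f)); rewrite -comp_addl !addr0. Qed.

Lemma comp0r A B D (g : Hom B D) : compose g (0 : Hom A B) = 0.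
Proof. by apply: (@addrI _ (compose g 0)); rewrite -comp_addr !addr0. Qed.

Lemma compNl A B D (g : Hom B D) (f : Hom A B) : compose (- g) f = - compose g f.
Proof. by apply: (@addrI _ (compose g f)); rewrite -comp_addl !subrr comp0l. Qed.

Lemma compNr A B D (g : Hom B D) (f : Hom A B) : compose g (- f) = - compose g f.
Proof. by apply: (@addrI _ (compose g f)); rewrite -comp_addr !subrr comp0r. Qed.

Lemma pullback_endo_id B D B' D' (p : Hom B D) (f : Hom D' D) (f' : Hom B' B)
    (p' : Hom B' D') (w : Hom B' B') :
  is_pullback p f f' p' -> compose f' w = f' -> compose p' w = p' -> w = idm B'.
Proof.
move=> [comm univ] f'w p'w; have [u [_ u_uniq]] := univ _ _ _ comm.
by rewrite (u_uniq w) // (u_uniq (idm B')) ?comp_id_r.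
Qed.

Section Biproduct.
Variables (A B S : C) (i1 : Hom A S) (i2 : Hom B S) (p1 : Hom S A) (p2 : Hom S B).
Hypothesis bp : is_biproduct i1 i2 p1 p2.

Lemma biproduct_sym : is_biproduct i2 i1 p2 p1.
Proof. by case: bp => *; split => //; rewrite addrC. Qed.

Lemma biproduct_proj1_pair E (g : Hom E A) (h : Hom E B) :
  compose p1 (compose i1 g + compose i2 h) = g.
Proof.
case: bp => p1i1 _ p1i2 _ _.
by rewrite comp_addr !comp_assoc p1i1 p1i2 comp0l addr0 comp_id_l.
Qed.

Lemma biproduct_proj2_pair E (g : Hom E A) (h : Hom E B) :
  compose p2 (compose i1 g + compose i2 h) = h.
Proof.
case: bp => _ p2i2 _ p2i1 _.
by rewrite comp_addr !comp_assoc p2i2 p2i1 comp0l add0r comp_id_l.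
Qed.

Lemma biproduct_ext E (u v : Hom E S) :
  compose p1 u = compose p1 v -> compose p2 u = compose p2 v -> u = v.
Proof.
case: bp => _ _ _ _ sum_id eq1 eq2.
rewrite -(comp_id_l u) -(comp_id_l v) -sum_id !comp_addl.
by rewrite -!comp_assoc eq1 eq2.
Qed.

Lemma biproduct_pullback_zero D (c : Hom A D) (d : Hom B D) :
  is_zero_object D -> is_pullback c d p1 p2.
Proof.
move=> [into_D _]; split=> [|E g h _]; first exact: into_D.
exists (compose i1 g + compose i2 h).
split; first by rewrite biproduct_proj1_pair biproduct_proj2_pair.
by move=> u <- <-; apply: biproduct_ext;
  rewrite ?biproduct_proj1_pair ?biproduct_proj2_pair.
Qed.

(* The graph of -f gives a second biproduct structure on S, whose second
   projection is [f, 1]. *)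
Lemma biproduct_shear (f : Hom A B) :
  is_biproduct (i1 - compose i2 f) i2 p1 (compose f p1 + p2).
Proof.
case: bp => p1i1 p2i2 p1i2 p2i1 sum_id; split.
- by rewrite comp_addr compNr p1i1 comp_assoc p1i2 comp0l subr0.
- by rewrite comp_addl -comp_assoc p1i2 comp0r add0r.
- exact: p1i2.
- rewrite comp_addl !comp_addr !compNr -!comp_assoc p1i1 p2i1.
  rewrite [compose p1 _]comp_assoc [compose p2 _]comp_assoc p1i2 p2i2.
  by rewrite comp0l comp0r comp_id_r comp_id_l subr0 add0r subrr.
- by rewrite comp_addl comp_addr compNl -!comp_assoc addrA subrK.
Qed.

End Biproduct.

Lemma biproduct_sum_pullback A B S T S' (i1 : Hom A S) (i2 : Hom B S)
    (p1 : Hom S A) (p2 : Hom S B) (j1 : Hom A S') (j2 : Hom T S')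
    (q1 : Hom S' A) (q2 : Hom S' T) (e : Hom B T) :
  is_biproduct i1 i2 p1 p2 -> is_biproduct j1 j2 q1 q2 ->
  is_pullback e q2 p2 (compose j1 p1 + compose j2 (compose e p2)).
Proof.
move=> bp bq; split=> [|E g h comm]; first by rewrite (biproduct_proj2_pair bq).
exists (compose i1 (compose q1 h) + compose i2 g); split.
  split; first by rewrite (biproduct_proj2_pair bp).
  apply: (biproduct_ext bq); rewrite comp_assoc.
  - by rewrite (biproduct_proj1_pair bq) (biproduct_proj1_pair bp).
  - by rewrite (biproduct_proj2_pair bq) -comp_assoc (biproduct_proj2_pair bp).
move=> u p2u <-; apply: (biproduct_ext bp).
- by rewrite (biproduct_proj1_pair bp) comp_assoc (biproduct_proj1_pair bq).
- by rewrite (biproduct_proj2_pair bp).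
Qed.
End PreAdditiveFacts.

Section ExactFacts.
Variable C : ExactCategory.
Implicit Types A B D S T : C.

Lemma eadm_epi_comp A B D (p : Hom A B) (q : Hom B D) :
  eadm_epi p -> eadm_epi q -> eadm_epi (compose q p).
Proof. by case: (ecat_exact C) => _ _ _ [_ comp_closed] _; apply: comp_closed. Qed.

Lemma eadm_epi_comp_iso B D S (p : Hom B D) (u : Hom S B) :
  eadm_epi p -> is_iso u -> eadm_epi (compose p u).
Proof.
case: (ecat_exact C) => _ iso_closed _ _ _.
move=> [A [i conf]] [v [vu uv]]; exists A, (compose v i).
apply: (iso_closed _ _ _ _ _ _ i p _ _ (idm A) v (idm D) conf).
- by exists (idm A); rewrite comp_id_l.
- by exists u.
- by exists (idm D); rewrite comp_id_l.
- by rewrite comp_id_r.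
- by rewrite comp_id_l -comp_assoc uv comp_id_r.
Qed.

Lemma pullback_eadm_epi B D B' D' (p : Hom B D) (f : Hom D' D) (f' : Hom B' B)
    (p' : Hom B' D') :
  is_pullback p f f' p' -> eadm_epi p -> eadm_epi p'.
Proof.
case: (ecat_exact C) => _ _ _ _ [_ pullback_exists] pb p_epi.
have [B'' [f'' [p'' [pb'' p''_epi]]]] := pullback_exists _ _ _ p f p_epi.
have [u [[f''u p''u] _]] := pb''.2 _ f' p' pb.1.
have [v [[f'v p'v] _]] := pb.2 _ f'' p'' pb''.1.
rewrite -p''u; apply: eadm_epi_comp_iso => //; exists v.
by split; [apply: (pullback_endo_id pb) | apply: (pullback_endo_id pb'')];
  rewrite comp_assoc ?f''u ?p''u ?f'v ?p'v.
Qed.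

(* The cokernel of the admissible monomorphism idm A is a zero object. *)
Lemma eadm_epi_to_zero A :
  exists D (c : Hom A D), eadm_epi c /\ is_zero_object D.
Proof.
case: (ecat_exact C) => kernel_pairs _ [id_mono _] _ _.
have [D [c conf]] := id_mono A.
have [_ [c0 c_univ]] := kernel_pairs _ _ _ _ _ conf.
rewrite comp_id_r in c0.
have from_D Y (k : Hom D Y) : k = 0.
  have [k0 [_ k0_uniq]] := c_univ Y 0 (comp0l _ _).
  by rewrite (k0_uniq k) ?c0 ?comp0r // (k0_uniq 0) // comp0l.
exists D, c; split; first by exists A, (idm A).
split=> Y f g; last by rewrite (from_D _ f) (from_D _ g).
by rewrite -(comp_id_l f) -(comp_id_l g) (from_D _ (idm D)) !comp0l.
Qed.

Lemma biproduct_proj2_eadm_epi A B S (i1 : Hom A S) (i2 : Hom B S)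
    (p1 : Hom S A) (p2 : Hom S B) :
  is_biproduct i1 i2 p1 p2 -> eadm_epi p2.
Proof.
move=> bp; have [D [c [c_epi zD]]] := eadm_epi_to_zero A.
exact: pullback_eadm_epi (biproduct_pullback_zero bp c 0 zD) c_epi.
Qed.

Lemma biproduct_row_eadm_epi A B S T (i1 : Hom A S) (i2 : Hom B S)
    (p1 : Hom S A) (p2 : Hom S B) (f : Hom A T) (e : Hom B T) :
  is_biproduct i1 i2 p1 p2 -> eadm_epi e ->
  eadm_epi (compose f p1 + compose e p2).
Proof.
move=> bp e_epi; have [S' [j1 [j2 [q1 [q2 bq]]]]] := (ecat_additive C).2 A T.
have sum_epi := pullback_eadm_epi (biproduct_sum_pullback e bp bq) e_epi.
have shear_epi := biproduct_proj2_eadm_epi (biproduct_shear bq f).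
have := eadm_epi_comp sum_epi shear_epi.
by rewrite comp_addl -!comp_assoc (biproduct_proj1_pair bq) (biproduct_proj2_pair bq).
Qed.

End ExactFacts.

Section ExactFunctorFacts.
Variables (F G : ExactCategory) (eta : ExactFunctor F G).

Lemma fmap0 (A B : F) : fmap eta (0 : Hom A B) = 0.
Proof. by apply: (@addrI _ (fmap eta 0)); rewrite -fmap_add !addr0. Qed.

Lemma fmap_eadm_epi (A B : F) (p : Hom A B) : eadm_epi p -> eadm_epi (fmap eta p).
Proof. by move=> [K [i conf]]; exists (eta K), (fmap eta i); apply: fmap_conflation. Qed.

Lemma fmap_biproduct (A B S : F) (i1 : Hom A S) (i2 : Hom B S) (p1 : Hom S A)
    (p2 : Hom S B) :
  is_biproduct i1 i2 p1 p2 ->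
  is_biproduct (fmap eta i1) (fmap eta i2) (fmap eta p1) (fmap eta p2).
Proof.
case=> e1 e2 e3 e4 e5; split.
- by rewrite -fmap_comp e1 fmap_id.
- by rewrite -fmap_comp e2 fmap_id.
- by rewrite -fmap_comp e3 fmap0.
- by rewrite -fmap_comp e4 fmap0.
- by rewrite -!fmap_comp -fmap_add e5 fmap_id.
Qed.

Lemma cond_star_ii_lift (X : F) (T : G) (g : Hom T (eta X)) :
  cond_star eta -> cond_ii eta -> eadm_epi g ->
  exists (U' : F) (h : Hom U' X) (f : Hom (eta U') T),
    eadm_epi f /\ compose g f = fmap eta h.
Proof.
move=> star cii g_epi; have [U [q q_epi]] := star T.
have [U' [p' [h [p'_epi gqp']]]] := cii U X (compose g q).
exists U', h, (compose q (fmap eta p')); rewrite comp_assoc gqp'; split=> //.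
exact: eadm_epi_comp (fmap_eadm_epi p'_epi) q_epi.
Qed.

Lemma cond_i_eadm_epi : cond_star eta -> cond_i eta -> cond_ii eta ->
  forall (X : F) (T : G) (g : Hom T (eta X)), eadm_epi g ->
    exists (Z : F) (p : Hom Z X) (f : Hom (eta Z) T),
      [/\ eadm_epi p, eadm_epi f & compose g f = fmap eta p].
Proof.
move=> star ci cii X T g g_epi.
have [Z0 [p0 [f0 [p0_epi gf0]]]] := ci X T g g_epi.
have [U' [h [f1 [f1_epi gf1]]]] := cond_star_ii_lift star cii g_epi.
have [Z [i1 [i2 [pi1 [pi2 bp]]]]] := (ecat_additive F).2 Z0 U'.
exists Z, (compose h pi2 + compose p0 pi1),
  (compose f0 (fmap eta pi1) + compose f1 (fmap eta pi2)); split.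
- exact: biproduct_row_eadm_epi (biproduct_sym bp) p0_epi.
- exact: biproduct_row_eadm_epi (fmap_biproduct bp) f1_epi.
- by rewrite comp_addr !comp_assoc gf0 gf1 fmap_add !fmap_comp addrC.
Qed.

Lemma reflects_cond_i : reflects_adm_epi eta -> cond_star eta -> cond_ii eta ->
  cond_i eta.
Proof.
move=> refl star cii X T g g_epi.
have [U' [h [f [f_epi gf]]]] := cond_star_ii_lift star cii g_epi.
exists U', h, f; split=> //; apply: refl; rewrite -gf.
exact: eadm_epi_comp f_epi g_epi.
Qed.

End ExactFunctorFacts.

Theorem lemma0p1 (F G : ExactCategory) (eta : ExactFunctor F G) :
  (cond_star eta -> cond_i eta -> cond_ii eta ->
    forall (X : F) (T : G) (g : Hom T (eta X)), eadm_epi g ->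
      exists (Z : F) (p : Hom Z X) (f : Hom (eta Z) T),
        [/\ eadm_epi p, eadm_epi f & compose g f = fmap eta p])
  /\
  (reflects_adm_epi eta -> cond_star eta -> cond_ii eta -> cond_i eta).
Proof. by split; [apply: cond_i_eadm_epi | apply: reflects_cond_i]. Qed.
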